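(* Consider the system, for environments $i=1,\dots,N$ and time steps $t=1,\dots,T$, $$x_{t+1}^{(i)} = f_0(x_t^{(i)}) + B(x_t^{(i)})u_t^{(i)} - f(x_t^{(i)},c^{(i)}) + w_t^{(i)},\qquad x_1^{(i)}=0,$$ under the standing assumptions described in the context (full actuation, $\|w_t^{(i)}\|\le W$, e-ISS of $f_0$ with constants $\beta,\gamma,\rho$). Assume the unknown dynamics has the form $f(x,c)=F(\phi(x;\Theta),c)$ for a known model $F(\phi(\cdot;\cdot),\cdot)$ and some true parameter $\Theta\in\mathcal{K}_1\subseteq\mathbb{R}^p$, with $c^{(i)}\in\mathcal{K}_2\subseteq\mathbb{R}^h$ for all $i$, where $\mathcal{K}_1,\mathcal{K}_2$ are convex sets, and assume each observed loss $\ell_t^{(i)}(\hat\Theta,\hat c)$ is differentiable and jointly convex in $(\hat\Theta,\hat c)$. Run OMAC in its convex instantiation (described in the context) with a meta-adapter $\mathcal{A}_1$ whose total regret is at most $T\cdot\varepsilon_1(N)$ and an inner-adapter $\mathcal{A}_2$ whose total regret is at most $N\cdot\varepsilon_2(T)$, where $\varepsilon_1(N)=o(N)$ and $\varepsilon_2(T)=o(T)$. Then $$\mathsf{ACE}:=\frac{1}{TN}\sum_{i=1}^N\sum_{t=1}^T\|x_t^{(i)}\| \le \frac{\gamma}{1-\rho}\sqrt{W^2+\frac{\varepsilon_2(T)}{T}+\frac{\varepsilon_1(N)}{N}}.$$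
   Context: Setting: states $x_t^{(i)}\in\mathbb{R}^n$, controls $u_t^{(i)}\in\mathbb{R}^m$, known $f_0:\mathbb{R}^n\to\mathbb{R}^n$, known $B:\mathbb{R}^n\to\mathbb{R}^{n\times m}$ with $\mathrm{rank}(B(x))=n$ for all $x$, unknown $f:\mathbb{R}^n\times\mathbb{R}^h\to\mathbb{R}^n$, unknown environment parameters $c^{(i)}$ (possibly chosen adversarially and adaptively), and disturbances $w_t^{(i)}$ (possibly adversarial) with $\|w_t^{(i)}\|\le W$. $f_0$ is exponentially input-to-state stable (e-ISS): there are $\beta,\gamma\ge0$, $0\le\rho<1$ such that for every $t$ and every $v_1,\dots,v_{t-1}\in\mathbb{R}^n$, the iterates $x_{k+1}=f_0(x_k)+v_k$ satisfy $\|x_t\|\le\beta\rho^{t-1}\|x_1\|+\gamma\sum_{k=1}^{t-1}\rho^{t-1-k}\|v_k\|$. Write $B_t^{(i)}=B(x_t^{(i)})$, $f_t^{(i)}=f(x_t^{(i)},c^{(i)})$. OMAC (convex instantiation): parameters $\hat\Theta^{(i)}\in\mathcal{K}_1$ (one per environment, $\hat\Theta^{(1)}\in\mathcal{K}_1$ initialized by $\mathcal{A}_1$) and $\hat c_t^{(i)}\in\mathcal{K}_2$ ($\hat c_1^{(i)}\in\mathcal{K}_2$ initialized by $\mathcal{A}_2$ in each environment). At step $(i,t)$ the controller computes $\hat f_t^{(i)}=F(\phi(x_t^{(i)};\hat\Theta^{(i)}),\hat c_t^{(i)})$, applies $u_t^{(i)}=B_t^{(i)\dagger}\hat f_t^{(i)}$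 ($\dagger$ = pseudo-inverse), observes $x_{t+1}^{(i)}$ and $y_t^{(i)}=f_0(x_t^{(i)})+B_t^{(i)}u_t^{(i)}-x_{t+1}^{(i)}=f_t^{(i)}-w_t^{(i)}$, and forms the loss $\ell_t^{(i)}(\hat\Theta,\hat c)=\|F(\phi(x_t^{(i)};\hat\Theta),\hat c)-y_t^{(i)}\|^2$. The inner cost is the linear function $g_t^{(i)}(\hat c)=\nabla_{\hat c}\ell_t^{(i)}(\hat\Theta^{(i)},\hat c_t^{(i)})\cdot\hat c$ and $\mathcal{A}_2$ produces $\hat c_{t+1}^{(i)}\in\mathcal{K}_2$ from $\hat c_t^{(i)}$ and $g_{1:t}^{(i)}$. At the end of environment $i$, the outer cost is $G^{(i)}(\hat\Theta)=\sum_{t=1}^T\nabla_{\hat\Theta}\ell_t^{(i)}(\hat\Theta^{(i)},\hat c_t^{(i)})\cdot\hat\Theta$ and $\mathcal{A}_1$ produces $\hat\Theta^{(i+1)}\in\mathcal{K}_1$ from $\hat\Theta^{(i)}$ and $G^{(1:i)}$. The parameters $c^{(i)}$ are never observed by the controller. Total regret of $\mathcal{A}_1$: $\sum_{i=1}^N G^{(i)}(\hat\Theta^{(i)})-\min_{\Theta'\in\mathcal{K}_1}\sum_{i=1}^N G^{(i)}(\Theta')$. Total regret of $\mathcal{A}_2$: $\sum_{i=1}^N\big[\sum_{t=1}^T g_t^{(i)}(\hat c_t^{(i)})-\min_{c'\in\mathcal{K}_2}\sum_{t=1}^T g_t^{(i)}(c')\big]$. *)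

From HB Require Import structures.
From mathcomp Require Import all_boot all_order all_algebra.
From mathcomp Require Import all_classical all_reals all_analysis.
Set Implicit Arguments. Unset Strict Implicit. Unset Printing Implicit Defensive.
Import Order.TTheory GRing.Theory Num.Theory.
Import numFieldNormedType.Exports.
Local Open Scope ring_scope.
Local Open Scope classical_set_scope.

Notation vec R n := 'cV[R]_n.

Definition enorm (R : realType) (n : nat) (v : vec R n) : R :=
  Num.sqrt (\sum_(j < n) v j 0 ^+ 2).

(* Moore-Penrose pseudo-inverse, characterized by the four Penrose equations
   (real case: conjugate transpose = transpose). It exists and is unique. *)
Definition is_pseudo_inverse (R : realType) (n m : nat)
    (A : 'M[R]_(n, m)) (X : 'M[R]_(m, n)) : Prop :=
  [/\ A *m X *m A = A, X *m A *m X = X,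
      (A *m X)^T = A *m X & (X *m A)^T = X *m A].

Definition eISS (R : realType) (n : nat) (f0 : vec R n -> vec R n)
    (beta gamma rho : R) : Prop :=
  [/\ 0 <= beta, 0 <= gamma, 0 <= rho, rho < 1 &
    forall (x v : nat -> vec R n),
      (forall k, x k.+1 = f0 (x k) + v k) ->
      forall t, (1 <= t)%N ->
        enorm (x t) <= beta * rho ^+ t.-1 * enorm (x 1%N)
          + gamma * \sum_(1 <= k < t) rho ^+ (t.-1 - k) * enorm (v k)].

Definition convex_vset (R : realType) (p : nat) (K : set (vec R p)) : Prop :=
  forall a b (s : R), K a -> K b -> 0 <= s <= 1 -> K ((1 - s) *: a + s *: b).

Definition jointly_convex (R : realType) (p h : nat)
    (l : vec R p * vec R h -> R) : Prop :=
  forall a b (s : R), 0 <= s <= 1 ->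
    l ((1 - s) *: a.1 + s *: b.1, (1 - s) *: a.2 + s *: b.2)
      <= (1 - s) * l a + s * l b.

Definition omac_loss (R : realType) (n p h : nat) (Phi : Type)
    (phi : vec R n -> vec R p -> Phi) (F : Phi -> vec R h -> vec R n)
    (x y : vec R n) : vec R p * vec R h -> R :=
  fun z => enorm (F (phi x z.1) z.2 - y) ^+ 2.


(* ---- OMAC closed loop (convex instantiation) ----
   Indices: environments i = 1..N, time steps t = 1..T (natural numbers).
   x i t : state, u i t : control, Th i : meta parameter Theta^(i),
   ch i t : inner parameter c^_t^(i). *)

Definition omac_y (R : realType) (n m : nat) (f0 : vec R n -> vec R n)
    (B : vec R n -> 'M[R]_(n, m)) (x : nat -> nat -> vec R n)
    (u : nat -> nat -> vec R m) (i t : nat) : vec R n :=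
  f0 (x i t) + B (x i t) *m u i t - x i t.+1.

Definition omac_lt (R : realType) (n m p h : nat) (Phi : Type)
    (phi : vec R n -> vec R p -> Phi) (F : Phi -> vec R h -> vec R n)
    (f0 : vec R n -> vec R n) (B : vec R n -> 'M[R]_(n, m))
    (x : nat -> nat -> vec R n) (u : nat -> nat -> vec R m) (i t : nat)
    : vec R p * vec R h -> R^o :=
  omac_loss phi F (x i t) (omac_y f0 B x u i t).

(* inner linear cost g_t^(i)(c) = grad_c l_t^(i)(Th^(i), c^_t^(i)) . c,
   i.e. the differential of l_t^(i) at (Th^(i), c^_t^(i)) applied to (0, c). *)
Definition omac_g (R : realType) (n m p h : nat) (Phi : Type)
    (phi : vec R n -> vec R p -> Phi) (F : Phi -> vec R h -> vec R n)
    (f0 : vec R n -> vec R n) (B : vec R n -> 'M[R]_(n, m))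
    (x : nat -> nat -> vec R n) (u : nat -> nat -> vec R m)
    (Th : nat -> vec R p) (ch : nat -> nat -> vec R h) (i t : nat)
    : vec R h -> R :=
  fun c => 'd (omac_lt phi F f0 B x u i t) (Th i, ch i t) (0, c).

(* outer linear cost G^(i)(Th) = sum_{t=1}^T grad_Th l_t^(i)(Th^(i), c^_t^(i)) . Th *)
Definition omac_G (R : realType) (n m p h : nat) (Phi : Type)
    (phi : vec R n -> vec R p -> Phi) (F : Phi -> vec R h -> vec R n)
    (f0 : vec R n -> vec R n) (B : vec R n -> 'M[R]_(n, m))
    (x : nat -> nat -> vec R n) (u : nat -> nat -> vec R m)
    (Th : nat -> vec R p) (ch : nat -> nat -> vec R h) (T i : nat)
    : vec R p -> R :=
  fun Th' => \sum_(1 <= t < T.+1)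
    'd (omac_lt phi F f0 B x u i t) (Th i, ch i t) (Th', 0).

(* A1 : (current Theta^, past outer costs G^(1:i)) -> next Theta^, A1init its
   initial output; A2 : (current c^, past inner costs g_(1:t)) -> next c^,
   A2init its initial output (used in each environment). *)
Definition omac_run (R : realType) (n m p h : nat) (Phi : Type)
    (f0 : vec R n -> vec R n) (B : vec R n -> 'M[R]_(n, m))
    (Bdag : vec R n -> 'M[R]_(m, n))
    (f : vec R n -> vec R h -> vec R n)
    (phi : vec R n -> vec R p -> Phi) (F : Phi -> vec R h -> vec R n)
    (A1init : vec R p) (A1 : vec R p -> seq (vec R p -> R) -> vec R p)
    (A2init : vec R h) (A2 : vec R h -> seq (vec R h -> R) -> vec R h)
    (N T : nat) (c : nat -> vec R h) (w : nat -> nat -> vec R n)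
    (x : nat -> nat -> vec R n) (u : nat -> nat -> vec R m)
    (Th : nat -> vec R p) (ch : nat -> nat -> vec R h) : Prop :=
  [/\
      forall i, (1 <= i <= N)%N -> x i 1%N = 0,
      forall i t, (1 <= i <= N)%N -> (1 <= t <= T)%N ->
        x i t.+1 = f0 (x i t) + B (x i t) *m u i t - f (x i t) (c i) + w i t,
      forall i t, (1 <= i <= N)%N -> (1 <= t <= T)%N ->
        u i t = Bdag (x i t) *m F (phi (x i t) (Th i)) (ch i t),
      Th 1%N = A1init /\
      (forall i, (1 <= i < N)%N ->
        Th i.+1 = A1 (Th i)
          [seq omac_G phi F f0 B x u Th ch T j | j <- iota 1 i]) &
      forall i, (1 <= i <= N)%N ->
        ch i 1%N = A2init /\
        (forall t, (1 <= t < T)%N ->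
          ch i t.+1 = A2 (ch i t)
            [seq omac_g phi F f0 B x u Th ch i s | s <- iota 1 t])].

From HB Require Import structures.
From mathcomp Require Import all_boot all_order all_algebra.
From mathcomp Require Import all_classical all_reals all_analysis.
From mathcomp Require Import lra ring.
Set Implicit Arguments. Unset Strict Implicit. Unset Printing Implicit Defensive.
Import Order.TTheory GRing.Theory Num.Theory.
Import numFieldNormedType.Exports.
Local Open Scope ring_scope.
Local Open Scope classical_set_scope.

(* Certainty-equivalent control cancels the estimated dynamics, so the input
   v_t = x_{t+1} - f0(x_t) seen by the e-ISS system f0 is the prediction error
   y_t - F(phi(x_t; Theta^), c^_t), and |v_t|^2 is the observed loss at the
   current estimate, while the loss at the true parameters is |w_t|^2.
   Convexity bounds the difference of these two losses by the linearised outer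
   and inner costs, whose sums are the regrets of A1 and A2; hence the mean of
   |v_t|^2 is at most W^2 + eps2(T)/T + eps1(N)/N.  Cauchy-Schwarz bounds the
   mean of |v_t| by the square root of this, and summing the e-ISS estimate
   over time (from x_1 = 0) bounds the mean of |x_t| by gamma/(1-rho) times
   the mean of |v_t|. *)

Lemma row_free_mulmx_pseudo_inverse (R : realType) (n m : nat) (A : 'M[R]_(n, m)) X :
  row_free A -> is_pseudo_inverse A X -> A *m X = 1%:M.
Proof.
move=> freeA [AXA _ _ _]; apply/eqP.
by rewrite -subr_eq0 -(mulmx_free_eq0 _ freeA) mulmxBl AXA mul1mx subrr.
Qed.

Lemma convex_diff_le (R : realType) (V : normedModType R) (l : V -> R^o) (a b : V) :
  differentiable l a ->
  (forall s, 0 < s < 1 -> l (s *: (b - a) + a) <= (1 - s) * l a + s * l b) ->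
  'd l a (b - a) <= l b - l a.
Proof.
move=> dl cvx.
have /cvg_ex [D HD] := @diff_derivable _ _ _ l a (b - a) dl.
rewrite -deriveE // /derive (cvg_lim _ HD) //.
have HD' : (fun t : R => t^-1 *: ((l \o shift a) (t *: (b - a)) - l a)) @ 0^'+ --> D.
  have right_sub : ((0 : R)^'+ : set_system R) `=>` (0 : R)^'.
    move=> A; rewrite /dnbhs /within /=.
    by apply: filterS => y Ay y0; apply: Ay; rewrite gt_eqF.
  exact: cvg_trans (cvg_app _ right_sub) HD.
rewrite -(cvg_lim _ HD') //; apply: limr_le; first by apply/cvg_ex; exists D.
(* By convexity every difference quotient at a in the direction b - a is
   at most l b - l a. *)
near=> s.
have s0 : 0 < s by near: s; exact: nbhs_right_gt.
have s1 : s < 1 by near: s; exact: nbhs_right_lt.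
have := cvx s; rewrite s0 s1 => /(_ isT) le_s.
rewrite /= -[_ *: _]/(s^-1 * _) mulrC ler_pdivrMr //.
nra.
Unshelve. all: by end_near. Qed.

Lemma jointly_convex_diff_le (R : realType) (p h : nat)
    (l : vec R p * vec R h -> R^o) (a b : vec R p * vec R h) :
  differentiable l a -> jointly_convex l -> 'd l a (b - a) <= l b - l a.
Proof.
move=> dl cvx; apply: convex_diff_le => // s /andP [s0 s1].
have -> : s *: (b - a) + a = ((1 - s) *: a.1 + s *: b.1, (1 - s) *: a.2 + s *: b.2).
  by rewrite [LHS]surjective_pairing /=; congr pair;
    rewrite scalerBl scale1r scalerBr addrAC [RHS]addrC addrA.
by apply: cvx; rewrite !ltW.
Qed.

Section DiscountedSum.
Variables (R : comPzRingType) (rho : R) (a : nat -> R).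

Definition discounted_sum (t : nat) : R := \sum_(1 <= k < t) rho ^+ (t.-1 - k) * a k.

Lemma discounted_sumSS t :
  discounted_sum t.+2 = rho * discounted_sum t.+1 + a t.+1.
Proof.
rewrite /discounted_sum big_nat_recr //= subnn expr0 mul1r big_distrr /=.
congr (_ + _); apply: eq_big_nat => k /andP [_ kt].
by rewrite mulrA -exprS subSn.
Qed.

Lemma sum_discounted_sum T :
  (1 - rho) * \sum_(1 <= t < T.+1) discounted_sum t
  = \sum_(1 <= t < T.+1) a t - discounted_sum T.+1.
Proof.
elim: T => [|T IH]; first by rewrite !big_geq // mulr0 /discounted_sum big_geq // subr0.
rewrite big_nat_recr // [in RHS]big_nat_recr //= mulrDr IH discounted_sumSS.
ring.
Qed.

End DiscountedSum.

Lemma discounted_sum_ge0 (R : numDomainType) (rho : R) a t :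
  0 <= rho -> (forall k, 0 <= a k) -> 0 <= discounted_sum rho a t.
Proof.
by move=> rho0 a0; apply: sumr_ge0 => k _; rewrite mulr_ge0 ?exprn_ge0.
Qed.

Lemma sum_discounted_sum_le (R : numFieldType) (rho : R) a T :
  0 <= rho < 1 -> (forall k, 0 <= a k) ->
  \sum_(1 <= t < T.+1) discounted_sum rho a t
    <= (1 - rho)^-1 * \sum_(1 <= t < T.+1) a t.
Proof.
move=> /andP [rho0 rho1] a0; have rho1' : 0 < 1 - rho by rewrite subr_gt0.
rewrite ler_pdivlMl // sum_discounted_sum lerBlDr lerDl.
exact: discounted_sum_ge0.
Qed.

Lemma enorm0 (R : realType) (n : nat) : enorm (0 : vec R n) = 0.
Proof. by rewrite /enorm big1 ?sqrtr0 // => j _; rewrite mxE expr0n. Qed.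

Lemma eISS_sum_le (R : realType) (n : nat) (f0 : vec R n -> vec R n)
    beta gamma rho (x : nat -> vec R n) T :
  eISS f0 beta gamma rho -> x 1%N = 0 ->
  \sum_(1 <= t < T.+1) enorm (x t)
    <= gamma / (1 - rho) * \sum_(1 <= t < T.+1) enorm (x t.+1 - f0 (x t)).
Proof.
move=> [_ gamma0 rho0 rho1 iss] x1.
set a := fun k => enorm (x k.+1 - f0 (x k)).
have a0 k : 0 <= a k by exact: sqrtr_ge0.
apply: (@le_trans _ _ (gamma * \sum_(1 <= t < T.+1) discounted_sum rho a t)).
  rewrite mulr_sumr; apply: ler_sum_nat => t /andP [t1 _].
  have x_rec k : x k.+1 = f0 (x k) + (x k.+1 - f0 (x k)) by rewrite addrC subrK.
  have := iss x _ x_rec t t1.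
  by rewrite x1 enorm0 mulr0 add0r.
by rewrite -mulrA ler_wpM2l // sum_discounted_sum_le ?rho0.
Qed.

Lemma sum_sqr_centered (R : comPzRingType) (I : Type) (r : seq I)
    (a : I -> R) (mu : R) :
  \sum_(i <- r) (a i - mu) ^+ 2
  = \sum_(i <- r) a i ^+ 2 - 2 * mu * \sum_(i <- r) a i + mu ^+ 2 * (size r)%:R.
Proof.
rewrite -sum1_size natr_sum !mulr_sumr -sumrB -big_split /=.
by apply: eq_bigr => i _; ring.
Qed.

Lemma sqr_sum_le (R : realFieldType) (I : Type) (r : seq I) (a : I -> R) :
  (\sum_(i <- r) a i) ^+ 2 <= (size r)%:R * \sum_(i <- r) a i ^+ 2.
Proof.
case: r => [|i0 r]; first by rewrite !big_nil expr0n mulr0.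
set s := (size _)%:R; set S := \sum_(i <- _) a i; set S2 := \sum_(i <- _) _ ^+ 2.
have s0 : 0 < s by rewrite ltr0n.
have : 0 <= \sum_(i <- i0 :: r) (a i - S / s) ^+ 2.
  by apply: sumr_ge0 => i _; apply: sqr_ge0.
rewrite sum_sqr_centered -/s -/S -/S2.
have -> : S2 - 2 * (S / s) * S + (S / s) ^+ 2 * s = S2 - S ^+ 2 / s.
  by field; rewrite gt_eqF.
by rewrite subr_ge0 ler_pdivrMr // mulrC.
Qed.

Lemma sum_le_size_sqrt (R : rcfType) (I : Type) (r : seq I) (a : I -> R) (Q : R) :
  \sum_(i <- r) a i ^+ 2 <= (size r)%:R * Q ->
  \sum_(i <- r) a i <= (size r)%:R * Num.sqrt Q.
Proof.
move=> le2; set s := (size r)%:R; have s0 : 0 <= s := ler0n _ _.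
apply: (le_trans (ler_norm _)).
rewrite -sqrtr_sqr -(ger0_norm s0) -sqrtr_sqr -sqrtrM ?sqr_ge0 //.
apply: ler_wsqrtr; apply: (le_trans (sqr_sum_le r a)).
by rewrite expr2 -mulrA ler_wpM2l.
Qed.

Lemma sum2_le_size_sqrt (R : rcfType) (I J : Type) (r1 : seq I) (r2 : seq J)
    (a : I -> J -> R) (Q : R) :
  \sum_(i <- r1) \sum_(j <- r2) a i j ^+ 2 <= (size r1 * size r2)%:R * Q ->
  \sum_(i <- r1) \sum_(j <- r2) a i j <= (size r1 * size r2)%:R * Num.sqrt Q.
Proof.
rewrite -(size_allpairs pair r1 r2).
rewrite -(big_allpairs (F := fun z => a z.1 z.2)).
rewrite -(big_allpairs (F := fun z => a z.1 z.2 ^+ 2)) /=.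
exact: sum_le_size_sqrt.
Qed.

Section CertaintyEquivalentControl.
Variables (R : realType) (n m p h : nat) (Phi : Type).
Variables (f0 : vec R n -> vec R n) (B : vec R n -> 'M[R]_(n, m))
  (Bdag : vec R n -> 'M[R]_(m, n)) (f : vec R n -> vec R h -> vec R n)
  (phi : vec R n -> vec R p -> Phi) (F : Phi -> vec R h -> vec R n).
Variables (Theta : vec R p) (W : R) (N T : nat) (c : nat -> vec R h)
  (w : nat -> nat -> vec R n) (x : nat -> nat -> vec R n)
  (u : nat -> nat -> vec R m) (Th : nat -> vec R p) (ch : nat -> nat -> vec R h).

Hypothesis B_row_free : forall z, row_free (B z).
Hypothesis Bdag_pinv : forall z, is_pseudo_inverse (B z) (Bdag z).
Hypothesis f_model : forall z cc, f z cc = F (phi z Theta) cc.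
Hypothesis dynamics : forall i t, (1 <= i <= N)%N -> (1 <= t <= T)%N ->
  x i t.+1 = f0 (x i t) + B (x i t) *m u i t - f (x i t) (c i) + w i t.
Hypothesis control : forall i t, (1 <= i <= N)%N -> (1 <= t <= T)%N ->
  u i t = Bdag (x i t) *m F (phi (x i t) (Th i)) (ch i t).

Local Notation l := (omac_lt phi F f0 B x u).
Local Notation g := (omac_g phi F f0 B x u Th ch).
Local Notation G := (omac_G phi F f0 B x u Th ch T).

Lemma control_cancels i t : (1 <= i <= N)%N -> (1 <= t <= T)%N ->
  B (x i t) *m u i t = F (phi (x i t) (Th i)) (ch i t).
Proof.
by move=> Hi Ht; rewrite control // mulmxA row_free_mulmx_pseudo_inverse // mul1mx.
Qed.

Lemma omac_lt_estimate i t : (1 <= i <= N)%N -> (1 <= t <= T)%N ->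
  l i t (Th i, ch i t) = enorm (x i t.+1 - f0 (x i t)) ^+ 2.
Proof.
move=> Hi Ht; rewrite /omac_lt /omac_loss /omac_y /= control_cancels //.
by rewrite opprB addrC opprD addrA subrK.
Qed.

Lemma omac_lt_truth i t : (1 <= i <= N)%N -> (1 <= t <= T)%N ->
  l i t (Theta, c i) = enorm (w i t) ^+ 2.
Proof.
move=> Hi Ht; rewrite /omac_lt /omac_loss /omac_y /= dynamics // -f_model.
by rewrite opprB addrAC (addrAC (f0 _ + _)) subrr add0r addNKr.
Qed.

Lemma omac_residual_sqr_le i t : (1 <= i <= N)%N -> (1 <= t <= T)%N ->
  differentiable (l i t) (Th i, ch i t) -> jointly_convex (l i t) ->
  enorm (x i t.+1 - f0 (x i t)) ^+ 2 <= enorm (w i t) ^+ 2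
    + ('d (l i t) (Th i, ch i t) (Th i, 0) - 'd (l i t) (Th i, ch i t) (Theta, 0))
    + (g i t (ch i t) - g i t (c i)).
Proof.
move=> Hi Ht dl cvx.
have := jointly_convex_diff_le (Theta, c i) dl cvx.
rewrite omac_lt_estimate // omac_lt_truth // /omac_g.
have -> : (Theta, c i) - (Th i, ch i t)
    = ((Theta, 0) - (Th i, 0)) + ((0, c i) - (0, ch i t)) :> vec R p * vec R h.
  by congr pair; rewrite /= subrr ?addr0 ?add0r.
rewrite linearD !linearB /=; lra.
Qed.

Hypothesis loss_convex : forall i t, (1 <= i <= N)%N -> (1 <= t <= T)%N ->
  (forall z, differentiable (l i t) z) /\ jointly_convex (l i t).
Hypothesis noise_bound : forall i t, (1 <= i <= N)%N -> (1 <= t <= T)%N ->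
  enorm (w i t) <= W.

Lemma omac_sum_residual_sqr_le_regret :
  \sum_(1 <= i < N.+1) \sum_(1 <= t < T.+1) enorm (x i t.+1 - f0 (x i t)) ^+ 2
  <= \sum_(1 <= i < N.+1) \sum_(1 <= t < T.+1) enorm (w i t) ^+ 2
     + (\sum_(1 <= i < N.+1) G i (Th i) - \sum_(1 <= i < N.+1) G i Theta)
     + \sum_(1 <= i < N.+1)
         (\sum_(1 <= t < T.+1) g i t (ch i t) - \sum_(1 <= t < T.+1) g i t (c i)).
Proof.
rewrite -sumrB -!big_split /=; apply: ler_sum_nat => i Hi.
rewrite /omac_G -!sumrB -!big_split /=; apply: ler_sum_nat => t Ht.
by have [dl cvx] := loss_convex Hi Ht; apply: omac_residual_sqr_le.
Qed.

Lemma omac_sum_residual_sqr_le (regret1 regret2 : R) :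
  \sum_(1 <= i < N.+1) G i (Th i) - \sum_(1 <= i < N.+1) G i Theta <= regret1 ->
  \sum_(1 <= i < N.+1)
    (\sum_(1 <= t < T.+1) g i t (ch i t) - \sum_(1 <= t < T.+1) g i t (c i))
    <= regret2 ->
  \sum_(1 <= i < N.+1) \sum_(1 <= t < T.+1) enorm (x i t.+1 - f0 (x i t)) ^+ 2
    <= (T * N)%:R * W ^+ 2 + regret1 + regret2.
Proof.
move=> le1 le2; apply: le_trans omac_sum_residual_sqr_le_regret _.
suff noise : \sum_(1 <= i < N.+1) \sum_(1 <= t < T.+1) enorm (w i t) ^+ 2
    <= (T * N)%:R * W ^+ 2 by lra.
have -> : (T * N)%:R * W ^+ 2 = \sum_(1 <= i < N.+1) \sum_(1 <= t < T.+1) W ^+ 2.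
  by rewrite !sumr_const_nat !subn1 /= -mulrnA mulr_natl mulnC.
apply: ler_sum_nat => i Hi; apply: ler_sum_nat => t Ht.
by rewrite !expr2 ler_pM ?sqrtr_ge0 ?noise_bound.
Qed.

End CertaintyEquivalentControl.

Theorem theorem3 (R : realType) (n m p h : nat) (Phi : Type)
    (f0 : vec R n -> vec R n) (B : vec R n -> 'M[R]_(n, m))
    (Bdag : vec R n -> 'M[R]_(m, n))
    (f : vec R n -> vec R h -> vec R n)
    (phi : vec R n -> vec R p -> Phi) (F : Phi -> vec R h -> vec R n)
    (Theta : vec R p) (K1 : set (vec R p)) (K2 : set (vec R h))
    (beta gamma rho W : R)
    (A1init : vec R p) (A1 : vec R p -> seq (vec R p -> R) -> vec R p)
    (A2init : vec R h) (A2 : vec R h -> seq (vec R h -> R) -> vec R h)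
    (eps1 eps2 : nat -> R)
    (N T : nat) (c : nat -> vec R h) (w : nat -> nat -> vec R n)
    (x : nat -> nat -> vec R n) (u : nat -> nat -> vec R m)
    (Th : nat -> vec R p) (ch : nat -> nat -> vec R h) :
  (* standing assumptions *)
  (forall z, \rank (B z) = n) ->
  (forall z, is_pseudo_inverse (B z) (Bdag z)) ->
  eISS f0 beta gamma rho ->
  (0 < N)%N -> (0 < T)%N ->
  (forall i t, (1 <= i <= N)%N -> (1 <= t <= T)%N -> enorm (w i t) <= W) ->
  (* structure of the unknown dynamics *)
  convex_vset K1 -> convex_vset K2 ->
  K1 Theta ->
  (forall i, (1 <= i <= N)%N -> K2 (c i)) ->
  (forall z cc, f z cc = F (phi z Theta) cc) ->
  (* the adapters output points of K1, K2 *)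
  K1 A1init -> (forall th Gs, K1 th -> K1 (A1 th Gs)) ->
  K2 A2init -> (forall cc gs, K2 cc -> K2 (A2 cc gs)) ->
  (* the closed-loop OMAC run *)
  omac_run f0 B Bdag f phi F A1init A1 A2init A2 N T c w x u Th ch ->
  (* observed losses are differentiable and jointly convex *)
  (forall i t, (1 <= i <= N)%N -> (1 <= t <= T)%N ->
     (forall z, differentiable (omac_lt phi F f0 B x u i t) z) /\
     jointly_convex (omac_lt phi F f0 B x u i t)) ->
  (* total regret of A1 is at most T * eps1(N) *)
  (forall Th', K1 Th' ->
     \sum_(1 <= i < N.+1) omac_G phi F f0 B x u Th ch T i (Th i)
     - \sum_(1 <= i < N.+1) omac_G phi F f0 B x u Th ch T i Th'
     <= T%:R * eps1 N) ->
  (* total regret of A2 is at most N * eps2(T) *)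
  (forall c' : nat -> vec R h, (forall i, K2 (c' i)) ->
     \sum_(1 <= i < N.+1)
       (\sum_(1 <= t < T.+1) omac_g phi F f0 B x u Th ch i t (ch i t)
        - \sum_(1 <= t < T.+1) omac_g phi F f0 B x u Th ch i t (c' i))
     <= N%:R * eps2 T) ->
  (* eps1(N) = o(N), eps2(T) = o(T) *)
  (fun k => eps1 k / k%:R) @ \oo --> (0 : R) ->
  (fun k => eps2 k / k%:R) @ \oo --> (0 : R) ->
  (* conclusion: average control error bound *)
  (T * N)%:R^-1 * \sum_(1 <= i < N.+1) \sum_(1 <= t < T.+1) enorm (x i t)
    <= gamma / (1 - rho)
       * Num.sqrt (W ^+ 2 + eps2 T / T%:R + eps1 N / N%:R).
Proof.
move=> rkB pinv iss N0 T0 wW _ _ KTh Kc fF _ _ KA2 _ [x1 dyn ctl _ _] loss.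
move=> reg1 reg2 _ _.
have [_ gamma0 _ rho1 _] := iss.
have B_free z : row_free (B z) by rewrite /row_free rkB.
set M : R := (T * N)%:R; set Q := W ^+ 2 + eps2 T / T%:R + eps1 N / N%:R.
have M0 : 0 < M by rewrite ltr0n muln_gt0 T0 N0.
have reg2c : \sum_(1 <= i < N.+1)
    (\sum_(1 <= t < T.+1) omac_g phi F f0 B x u Th ch i t (ch i t)
     - \sum_(1 <= t < T.+1) omac_g phi F f0 B x u Th ch i t (c i)) <= N%:R * eps2 T.
  (* A2's regret is measured against comparators in K2 at every index, so
     extend c outside 1..N by A2init. *)
  set c' := fun i => if (1 <= i <= N)%N then c i else A2init.
  have Kc' i : K2 (c' i) by rewrite /c'; case: ifP => // /Kc.
  have c'E i : (1 <= i <= N)%N -> c' i = c i by rewrite /c' => ->.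
  by under eq_big_nat => i Hi do rewrite -(c'E i Hi); apply: reg2.
have resid : \sum_(1 <= i < N.+1) \sum_(1 <= t < T.+1)
    enorm (x i t.+1 - f0 (x i t)) ^+ 2 <= M * Q.
  have -> : M * Q = M * W ^+ 2 + T%:R * eps1 N + N%:R * eps2 T.
    by rewrite /M /Q natrM; field; rewrite !pnatr_eq0 -!lt0n N0 T0.
  exact: (omac_sum_residual_sqr_le B_free pinv fF dyn ctl loss wW (reg1 _ KTh) reg2c).
set a := fun i t => enorm (x i t.+1 - f0 (x i t)) in resid *.
rewrite ler_pdivrMl //.
apply: (@le_trans _ _
  (gamma / (1 - rho) * \sum_(1 <= i < N.+1) \sum_(1 <= t < T.+1) a i t)).
  by rewrite mulr_sumr; apply: ler_sum_nat => i Hi; apply: eISS_sum_le iss (x1 i Hi).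
rewrite mulrCA; apply: ler_wpM2l; first by rewrite divr_ge0 // subr_ge0 ltW.
have := sum2_le_size_sqrt (r1 := index_iota 1 N.+1) (r2 := index_iota 1 T.+1)
  (a := a) (Q := Q).
by rewrite !size_iota !subn1 /= mulnC; apply.
Qed.
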